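(* For every positive integer $k$: the game $\mathcal{P}_D^{[12^k]}$ can be won perfectly by communicating $2k$ $SEP$-bits, i.e. a system $(\mathbb{C}^2\otimes_{\min}\mathbb{C}^2)^{\otimes_{\min}k}$ (indeed the $12^k$ product states $i_1\otimes\cdots\otimes i_k$, with each $i_t$ ranging over the twelve two-qubit states $\{|\kappa\kappa\rangle,|\kappa\bar\kappa\rangle,|\bar\kappa\kappa\rangle,|\bar\kappa\bar\kappa\rangle\}_{\kappa\in\{x,y,z\}}$, are pairwise distinguishable there), whereas under quantum composition perfect winning requires $2k+\lceil k\log_2 3\rceil$ qubits.
   Context: $(\mathbb{C}^2\otimes_{\min}\mathbb{C}^2)^{\otimes_{\min}k}$ denotes the $SEP$ (minimal tensor product) composition of $2k$ qubits: states are the fully separable density operators on $(\mathbb{C}^2)^{\otimes 2k}$ (convex combinations of tensor products of single-qubit density operators), and a measurement is a finite family of Hermitian operators $\{E_i\}$ summing to the identity with $\operatorname{Tr}(E_iX)\ge0$ for every fully separable positive operator $X$. Under quantum composition, $m$ qubits form the quantum system on $(\mathbb{C}^2)^{\otimes m}$ with density operators and POVMs. $|\kappa\rangle$ ($|\bar\kappa\rangle$) is the $+1$ ($-1$) eigenvector of the Pauli operator $\sigma_\kappa$, and $|\alpha\beta\rangle=|\alpha\rangle\otimes|\beta\rangle$. A set of states is pairwise distinguishable if each pair $\omega_i\ne\omega_j$ can be perfectly discriminated by some two-outcome measurement. The game $\mathcal{P}_D^{[n]}$: a referee gives Alice a message $\eta$ from a set $\mathcal{N}$, $|\mathcal{N}|=n$,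 and asks Bob whether Alice's message was $\eta$ or $\eta'$ for some $\eta'\neq\eta$; Alice and Bob share no correlations, Alice encodes $\eta$ into a state and sends it to Bob, who for each unordered pair $\{\eta,\eta'\}$ performs a measurement whose outcome is his answer; perfect winning means Bob answers correctly with probability $1$ for every $\eta$ and every $\eta'\neq\eta$. *)

From mathcomp Require Import all_boot all_order all_algebra.
From mathcomp Require Import reals exp.
From mathcomp.real_closed Require Export complex.
Set Implicit Arguments. Unset Strict Implicit. Unset Printing Implicit Defensive.
Import Order.TTheory GRing.Theory Num.Theory.
Local Open Scope ring_scope.

(* Operators on a finite-dimensional Hilbert space C^T (T a finite basis),
   represented by their matrix entries. *)
Definition op (C : numClosedFieldType) (T : finType) := T -> T -> C.

Section Operators.
Variables (C : numClosedFieldType) (T : finType).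

Definition opid : op C T := fun i j => (i == j)%:R.
Definition opmul (A B : op C T) : op C T := fun i j => \sum_l A i l * B l j.
Definition optr (A : op C T) : C := \sum_i A i i.
Definition hermitian (A : op C T) : Prop := forall i j, A j i = (A i j)^*.
Definition psd (A : op C T) : Prop :=
  hermitian A /\ forall v : T -> C, 0 <= \sum_i \sum_j (v i)^* * A i j * v j.
Definition density (A : op C T) : Prop := psd A /\ optr A = 1.

Definition two_outcome_meas (eff : op C T -> Prop) (E F : op C T) : Prop :=
  [/\ eff E, eff F & forall i j, E i j + F i j = opid i j].

Definition pairwise_distinguishable (eff : op C T -> Prop) (I : Type)
    (w : I -> op C T) : Prop :=
  forall i j, w i <> w j ->
    exists E F, [/\ two_outcome_meas eff E F, optr (opmul E (w i)) = 1
                  & optr (opmul F (w j)) = 1].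

(* Alice encodes eta into the state
   [enc eta] (satisfying [isState]); for the unordered pair {eta, eta'} Bob
   performs the two-outcome measurement {M eta eta', M eta' eta}, where the
   effect [M eta eta'] means "the message was eta". *)
Definition wins_PD_perfectly (isState eff : op C T -> Prop) (n : nat) : Prop :=
  exists enc : 'I_n -> op C T, (forall eta, isState (enc eta)) /\
  exists M : 'I_n -> 'I_n -> op C T,
    forall eta eta', eta != eta' ->
      two_outcome_meas eff (M eta eta') (M eta' eta) /\
      optr (opmul (M eta eta') (enc eta)) = 1.

End Operators.

(* Quantum composition: the effects are the positive semidefinite operators
   (POVM elements) and the states are the density operators. *)

(* Systems of qubits labelled by a finite type Q: computational basis of
   (C^2)^{\otimes Q}. *)
Definition qbasis (Q : finType) := {ffun Q -> 'I_2}.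

Section Qubits.
Variables (C : numClosedFieldType) (Q : finType).

Definition tensor (rho : Q -> op C 'I_2) : op C (qbasis Q) :=
  fun a b => \prod_(q : Q) rho q (a q) (b q).

Definition sep_positive (X : op C (qbasis Q)) : Prop :=
  exists (r : nat) (P : 'I_r -> Q -> op C 'I_2),
    (forall i q, psd (P i q)) /\
    forall a b, X a b = \sum_(i < r) tensor (P i) a b.

(* SEP (minimal tensor product) states: fully separable density operators *)
Definition sep_state (X : op C (qbasis Q)) : Prop :=
  exists (r : nat) (p : 'I_r -> C) (rho : 'I_r -> Q -> op C 'I_2),
    [/\ forall i, 0 <= p i, \sum_(i < r) p i = 1,
        forall i q, density (rho i q)
      & forall a b, X a b = \sum_(i < r) p i * tensor (rho i) a b].

Definition sep_effect (E : op C (qbasis Q)) : Prop :=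
  hermitian E /\ forall X, sep_positive X -> 0 <= optr (opmul E X).

End Qubits.

Section Twelve.
Variable C : numClosedFieldType.

(* kappa : 'I_3 encodes x (0), y (1), z (2); bar = false gives |kappa>, the
   +1 eigenvector of sigma_kappa, bar = true gives |bar kappa>, the -1
   eigenvector. *)
Definition pauli (kappa : 'I_3) : 'M[C]_2 :=
  if val kappa == 0%N then \matrix_(i < 2, j < 2) (i != j)%:R
  else if val kappa == 1%N then
    \matrix_(i < 2, j < 2)
      (if (val i == 0%N) && (val j == 1%N) then - 'i
       else if (val i == 1%N) && (val j == 0%N) then 'i else 0)
  else \matrix_(i < 2, j < 2) (if i == j then (if val i == 0%N then 1 else -1) else 0).

Definition ket (kappa : 'I_3) (bar : bool) : 'I_2 -> C :=
  fun i =>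
  let s : C := if bar then -1 else 1 in
  if val kappa == 0%N then (if val i == 0%N then 1 else s) / sqrtC 2
  else if val kappa == 1%N then (if val i == 0%N then 1 else s * 'i) / sqrtC 2
  else if val i == 0%N then (~~ bar)%:R else bar%:R.

Definition proj (v : 'I_2 -> C) : op C 'I_2 := fun i j => v i * (v j)^*.

(* the twelve two-qubit states |kappa kappa>, |kappa bar kappa>,
   |bar kappa kappa>, |bar kappa bar kappa> are indexed by
   (kappa, bar1, bar2) : 'I_3 * bool * bool.  The k-fold product state
   i_1 (x) ... (x) i_k lives on the 2k qubits labelled by 'I_k * 'I_2
   (qubits (t,0),(t,1) form the t-th SEP-bit C^2 (x)_min C^2). *)
Definition twelve_state (k : nat) (a : {ffun 'I_k -> 'I_3 * bool * bool})
  : op C (qbasis ('I_k * 'I_2)%type) :=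
  tensor (fun q : 'I_k * 'I_2 =>
    let: (kappa, b1, b2) := a q.1 in
    proj (ket kappa (if val q.2 == 0%N then b1 else b2))).

End Twelve.

From Pilot Require Import Defs.
From mathcomp Require Import all_boot all_order all_algebra.
From mathcomp Require Import boolp reals exp.
From mathcomp.real_closed Require Import complex.
From mathcomp.algebra_tactics Require Import ring lra.
Set Implicit Arguments. Unset Strict Implicit. Unset Printing Implicit Defensive.
Import Order.TTheory GRing.Theory Num.Theory.
Local Open Scope ring_scope.

(* Write |kappa b> for the eigenvectors of the Pauli operators.
   Two of the twelve two-qubit states x = |kappa b1> (x) |kappa b2> and
   y = |kappa' c1> (x) |kappa' c2> are separated by a correlation
   <A1 (x) B1 - A2 (x) B2> equal to +1 on x and -1 on y, where (A1, A2) and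
   (B1, B2) are "Bloch pairs": signed Pauli operators along distinct axes
   (or one of them together with the identity and 0).  For such pairs,
   |<A1>_P <B1>_Q - <A2>_P <B2>_Q| <= tr P tr Q for positive P, Q
   (Cauchy-Schwarz on Bloch vectors), so (Id +- (A1 (x) B1 - A2 (x) B2))/2 on
   one SEP-bit is a SEP measurement.  Two product states with different
   labels differ on some SEP-bit and are discriminated there.

   Every density operator has a nonzero support vector
   (via a Cholesky/Gram decomposition), annihilated by every effect that
   never fires on it; perfectly discriminated states have orthogonal support
   vectors, so 12^k <= 2^m, which is the logarithmic bound. *)

Section TraceAlgebra.
Variables (C : numClosedFieldType) (T : finType).
Implicit Types (A E F P X : op C T).

Lemma hermitian_opid : Defs.hermitian (@opid C T).
Proof. by move=> i j; rewrite /opid eq_sym conjC_nat. Qed.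

Lemma optr_opid P : optr (opmul (@opid C T) P) = optr P.
Proof.
rewrite /optr /opmul; apply: eq_bigr => a _.
rewrite (bigD1 a) //= big1 ?addr0 /opid ?eqxx ?mul1r // => b hb.
by rewrite eq_sym (negPf hb) mul0r.
Qed.

Lemma optr_scale (c : C) A P :
  optr (opmul (fun i j => c * A i j) P) = c * optr (opmul A P).
Proof.
rewrite /optr /opmul mulr_sumr; apply: eq_bigr => i _.
by rewrite mulr_sumr; apply: eq_bigr => j _; rewrite mulrA.
Qed.

Lemma optr_comb3 (c1 c2 c3 : C) (X Y Z P : op C T) :
  optr (opmul (fun a b => c1 * X a b + c2 * Y a b + c3 * Z a b) P) =
  c1 * optr (opmul X P) + c2 * optr (opmul Y P) + c3 * optr (opmul Z P).
Proof.
rewrite /optr /opmul !mulr_sumr -!big_split /=; apply: eq_bigr => i _.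
rewrite !mulr_sumr -!big_split /=; apply: eq_bigr => j _.
by rewrite !mulrDl !mulrA.
Qed.

Lemma optr_sumr (r : nat) E X (P : 'I_r -> op C T) :
  (forall a b, X a b = \sum_(i < r) P i a b) ->
  optr (opmul E X) = \sum_(i < r) optr (opmul E (P i)).
Proof.
move=> hX; rewrite /optr /opmul; symmetry.
rewrite exchange_big /=; apply: eq_bigr => a _.
by rewrite exchange_big /=; apply: eq_bigr => b _; rewrite hX mulr_sumr.
Qed.

Lemma optr_compl E F X : (forall a b, E a b + F a b = @opid C T a b) ->
  optr (opmul E X) + optr (opmul F X) = optr X.
Proof.
move=> hEF; rewrite -[optr X]optr_opid /optr /opmul -big_split /=.
apply: eq_bigr => a _; rewrite -big_split /=; apply: eq_bigr => b _.
by rewrite -mulrDl hEF.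
Qed.

Lemma optr_compl_certain E F X : (forall a b, E a b + F a b = @opid C T a b) ->
  optr X = 1 -> optr (opmul E X) = 1 -> optr (opmul F X) = 0.
Proof.
move=> hEF hX hE; have := optr_compl X hEF.
by rewrite hE hX -[RHS]addr0 => /addrI.
Qed.

End TraceAlgebra.

Section TensorProducts.
Variables (C : numClosedFieldType) (Q : finType).
Implicit Types (F P : Q -> op C 'I_2).

Lemma optr_tensor F P :
  optr (opmul (tensor F) (tensor P)) = \prod_q optr (opmul (F q) (P q)).
Proof.
rewrite /optr /opmul /tensor.
transitivity (\sum_(a : qbasis Q) \prod_q \sum_(j < 2) F q (a q) j * P q j (a q)).
  apply: eq_bigr => a _; rewrite bigA_distr_bigA.
  by apply: eq_bigr => b _; rewrite -big_split.
by rewrite bigA_distr_bigA.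
Qed.

Lemma opid_tensor : @opid C (qbasis Q) = tensor (fun _ => @opid C _).
Proof.
apply: funext => a; apply: funext => b; rewrite /opid /tensor.
have [->|neq] := eqVneq a b; first by rewrite big1 // => q _; rewrite eqxx.
have [q hq] : exists q, a q != b q.
  apply/existsP; rewrite -negb_forall; apply: contra neq => /forallP h.
  by apply/eqP/ffunP => q; apply/eqP.
by rewrite (bigD1 q) //= (negPf hq) mul0r.
Qed.

Lemma hermitian_tensor F : (forall q, Defs.hermitian (F q)) -> Defs.hermitian (tensor F).
Proof. by move=> hF a b; rewrite /tensor rmorph_prod; apply: eq_bigr => q _; apply: hF. Qed.

End TensorProducts.

Section Qubit.
Variable C : numClosedFieldType.

Definition o0 : 'I_2 := @Ordinal 2 0 isT.
Definition o1 : 'I_2 := @Ordinal 2 1 isT.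

Lemma ord2P (i : 'I_2) : i = o0 \/ i = o1.
Proof. by case: i => [[|[|n]] h] //; [left|right]; apply/val_inj. Qed.

Lemma ord3P (i : 'I_3) :
  [\/ i = @Ordinal 3 0 isT, i = @Ordinal 3 1 isT | i = @Ordinal 3 2 isT].
Proof.
by case: i => [[|[|[|n]]] h] //; [apply: Or31|apply: Or32|apply: Or33]; apply/val_inj.
Qed.

Lemma sum_ord2 (F : 'I_2 -> C) : \sum_(i < 2) F i = F o0 + F o1.
Proof. by rewrite big_ord_recl big_ord_recl big_ord0 addr0; congr (F _ + F _); apply/val_inj. Qed.

Lemma optr_qubit (A P : op C 'I_2) : optr (opmul A P) =
  A o0 o0 * P o0 o0 + A o0 o1 * P o1 o0 + A o1 o0 * P o0 o1 + A o1 o1 * P o1 o1.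
Proof. by rewrite /optr /opmul !sum_ord2 !addrA. Qed.

Lemma psd_proj (v : 'I_2 -> C) : psd (proj v).
Proof.
split; first by move=> i j; rewrite /proj rmorphM /= conjCK mulrC.
move=> w.
have -> : \sum_i \sum_j (w i)^* * proj v i j * w j =
          (\sum_i (w i)^* * v i) * (\sum_i (w i)^* * v i)^*.
  rewrite rmorph_sum /= mulr_suml; apply: eq_bigr => i _.
  rewrite mulr_sumr; apply: eq_bigr => j _.
  by rewrite /proj rmorphM /= conjCK; ring.
exact: mul_conjC_ge0.
Qed.

(* The Pauli operator sigma_kappa as an operator, and its signed version
   (-1)^b sigma_kappa, the observable whose +1 eigenvector is |kappa, b>. *)
Definition sigma (kap : 'I_3) : op C 'I_2 := fun i j => pauli C kap i j.
Definition sgn (b : bool) : C := if b then -1 else 1.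
Definition ssigma (b : bool) (kap : 'I_3) : op C 'I_2 := fun i j => sgn b * sigma kap i j.

Lemma sgnK (b : bool) : sgn b * sgn b = 1.
Proof. by case: b; rewrite /sgn ?mulrNN mulr1. Qed.

Lemma hermitian_ssigma b kap : Defs.hermitian (ssigma b kap).
Proof.
move=> i j; rewrite /ssigma /sigma /pauli /sgn.
case: (ord2P i) => ->; case: (ord2P j) => ->; case: (ord3P kap) => ->; case: b => /=;
  rewrite !mxE /= ?rmorphM ?rmorph0 ?rmorph1 ?rmorphN ?rmorph1 /= ?conjCi ?opprK //.
Qed.

Lemma optr_ssigma b kap (P : op C 'I_2) :
  optr (opmul (ssigma b kap) P) = sgn b * optr (opmul (sigma kap) P).
Proof. exact: optr_scale. Qed.

Lemma sqrt2_inv_conj : ((sqrtC (2 : C))^-1)^* = (sqrtC 2)^-1.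
Proof. by rewrite fmorphV /= conj_Creal // ger0_real // sqrtC_ge0 ler0n. Qed.

Lemma sqrt2_inv_sqr : 2 * ((sqrtC (2 : C))^-1 * (sqrtC 2)^-1) = 1.
Proof. by rewrite -invfM -expr2 sqrtCK divff // pnatr_eq0. Qed.

Lemma optr_proj_ket (kap : 'I_3) (b : bool) : optr (proj (ket C kap b)) = 1.
Proof.
have W := sqrt2_inv_sqr; have I : 'i * 'i = -1 :> C by rewrite -expr2 sqrCi.
rewrite /optr sum_ord2 /proj /ket.
case: (ord3P kap) => ->; case: b => /=;
  rewrite ?rmorphM ?rmorphN ?rmorph1 ?rmorph0 /= ?conjCi ?sqrt2_inv_conj; ring: W I.
Qed.

Lemma optr_sigma_ket (kap kap' : 'I_3) (b : bool) :
  optr (opmul (sigma kap') (proj (ket C kap b))) = if kap' == kap then sgn b else 0.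
Proof.
have W := sqrt2_inv_sqr; have I : 'i * 'i = -1 :> C by rewrite -expr2 sqrCi.
rewrite optr_qubit /proj /ket /sigma /pauli /sgn.
case: (ord3P kap) => ->; case: (ord3P kap') => ->; case: b => /=; rewrite !mxE /=;
  rewrite ?rmorphM ?rmorphN ?rmorph1 ?rmorph0 /= ?conjCi ?sqrt2_inv_conj;
  first [ring: W I
        | transitivity (- (2 * ((sqrtC (2 : C))^-1 * (sqrtC 2)^-1)));
          [ring | by rewrite W]].
Qed.

End Qubit.

(* Over C = R[i] a positive semidefinite qubit operator has the form
   [[a, u + iv], [u - iv, d]] with a, d >= 0 and u^2 + v^2 <= ad; its Bloch
   vector (2u, -2v, a - d) therefore has length at most its trace a + d. *)
Section QubitBloch.
Variable R : rcfType.
Local Notation C := R[i].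

Lemma cmulE (a b c d : R) :
  (Complex a b : C) * Complex c d = Complex (a * c - b * d) (a * d + b * c).
Proof. by []. Qed.
Lemma caddE (a b c d : R) : (Complex a b : C) + Complex c d = Complex (a + c) (b + d).
Proof. by []. Qed.
Lemma cconjE (a b : R) : (Complex a b : C)^* = Complex a (- b).
Proof. by []. Qed.
Lemma cleE (a b c d : R) : ((Complex a b : C) <= Complex c d) = (d == b) && (a <= c).
Proof. by rewrite lecE. Qed.
Lemma creal_mul (a b : R) : (Complex a 0 : C) * Complex b 0 = Complex (a * b) 0.
Proof. by rewrite cmulE !mulr0 !mul0r subr0 addr0. Qed.

(* The defining inequality of positivity, written out in real coordinates
   for the test vector (x0 + i y0, x1 + i y1). *)
Lemma psd_qubit_form (P : op C 'I_2) (a a' d d' u v p q : R) :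
  psd P -> P o0 o0 = Complex a a' -> P o1 o1 = Complex d d' ->
  P o0 o1 = Complex u v -> P o1 o0 = Complex p q ->
  forall x0 y0 x1 y1 : R,
  0 <= (x0 * (a * x0 - a' * y0) + y0 * (a * y0 + a' * x0)) +
       (x0 * (u * x1 - v * y1) + y0 * (u * y1 + v * x1)) +
       (x1 * (p * x0 - q * y0) + y1 * (p * y0 + q * x0)) +
       (x1 * (d * x1 - d' * y1) + y1 * (d * y1 + d' * x1)).
Proof.
move=> [_ pos] h00 h11 h01 h10 x0 y0 x1 y1.
have := pos (fun i => if val i == 0%N then Complex x0 y0 else Complex x1 y1).
rewrite !sum_ord2 /= h00 h11 h01 h10 !cconjE !cmulE !caddE cleE => /andP [_ h].
lra.
Qed.

Lemma psd_qubit (P : op C 'I_2) : psd P -> exists a d u v : R,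
  [/\ P o0 o0 = Complex a 0, P o1 o1 = Complex d 0, P o0 o1 = Complex u v,
      P o1 o0 = Complex u (- v) & [/\ 0 <= a, 0 <= d & u ^+ 2 + v ^+ 2 <= a * d]].
Proof.
move=> hP; have herm := hP.1.
case E00: (P o0 o0) => [a a']; case E11: (P o1 o1) => [d d'].
case E01: (P o0 o1) => [u v]; case E10: (P o1 o0) => [p q].
have := herm o0 o0; rewrite E00 cconjE => -[ha].
have := herm o1 o1; rewrite E11 cconjE => -[hd].
have := herm o1 o0; rewrite E01 E10 cconjE => -[hu hv].
have a'0 : a' = 0 by lra.
have d'0 : d' = 0 by lra.
subst a' d' u v; have F := psd_qubit_form hP E00 E11 E01 E10.
exists a, d, p, (- q); rewrite opprK; split => //.
have Ha := F 1 0 0 0; have Hd := F 0 0 1 0.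
have H1 := F d 0 (- p) (- q); have H2 := F (- p) q a 0.
have H3 := F 1 0 (- p) (- q).
have ga : 0 <= a by nra.
have gd : 0 <= d by nra.
split => //; have [d0|d_neq0] := eqVneq d 0.
  subst d; have [a0|a_neq0] := eqVneq a 0; first by subst a; nra.
  have a_gt0 : 0 < a by rewrite lt_def a_neq0.
  nra.
have d_gt0 : 0 < d by rewrite lt_def d_neq0.
nra.
Qed.

Lemma optr_qubit_coords (P : op C 'I_2) (a d : R) :
  P o0 o0 = Complex a 0 -> P o1 o1 = Complex d 0 -> optr P = Complex (a + d) 0.
Proof.
move=> h00 h11; rewrite /optr sum_ord2 h00 h11.
by apply/eqP; rewrite eq_complex /= addr0 !eqxx.
Qed.

Lemma optr_psd_ge0 (P : op C 'I_2) : psd P -> 0 <= optr P.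
Proof.
move=> /psd_qubit [a [d [u [v [h00 h11 _ _ [ha hd _]]]]]].
by rewrite (optr_qubit_coords h00 h11) cleE eqxx /=; lra.
Qed.

Definition bloch (a d u v : R) (kap : 'I_3) : R :=
  if val kap == 0%N then 2 * u else if val kap == 1%N then - (2 * v) else a - d.

Lemma optr_sigma_coords (P : op C 'I_2) (a d u v : R) :
  P o0 o0 = Complex a 0 -> P o1 o1 = Complex d 0 -> P o0 o1 = Complex u v ->
  P o1 o0 = Complex u (- v) ->
  forall kap, optr (opmul (sigma C kap) P) = Complex (bloch a d u v kap) 0.
Proof.
move=> h00 h11 h01 h10 kap; rewrite optr_qubit h00 h11 h01 h10 /sigma /pauli /bloch.
case: (ord3P kap) => -> /=; rewrite !mxE /= ?mul0r ?mul1r ?add0r ?addr0;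
  apply/eqP; rewrite eq_complex /=; apply/andP; split; apply/eqP; ring.
Qed.

Lemma bloch_bound2 (a d u v : R) kap kap' : kap != kap' -> 0 <= a -> 0 <= d ->
  u ^+ 2 + v ^+ 2 <= a * d ->
  bloch a d u v kap ^+ 2 + bloch a d u v kap' ^+ 2 <= (a + d) ^+ 2.
Proof.
move=> hk ha hd h; rewrite /bloch; have := sqr_ge0 (a - d).
by case: (ord3P kap) hk => ->; case: (ord3P kap') => -> //= _; nra.
Qed.

Lemma bloch_bound1 (a d u v : R) kap : 0 <= a -> 0 <= d ->
  u ^+ 2 + v ^+ 2 <= a * d -> bloch a d u v kap ^+ 2 <= (a + d) ^+ 2.
Proof.
move=> ha hd h; rewrite /bloch; have := sqr_ge0 (a - d).
by case: (ord3P kap) => -> /=; nra.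
Qed.

End QubitBloch.

(* A pair (A1, A2) of qubit observables is a Bloch pair when on every
   positive operator P their expectations are real and form a plane vector
   of length at most tr P; e.g. two signed Pauli operators along distinct
   axes, since the Bloch vector of P has length at most tr P. *)
Section BlochPairs.
Variable R : rcfType.
Local Notation C := R[i].

Definition bloch_pair (A1 A2 : op C 'I_2) : Prop :=
  forall P, psd P -> exists T x1 x2 : R,
  [/\ optr P = Complex T 0, optr (opmul A1 P) = Complex x1 0,
      optr (opmul A2 P) = Complex x2 0, 0 <= T & x1 ^+ 2 + x2 ^+ 2 <= T ^+ 2].

Definition zop : op C 'I_2 := fun _ _ => 0.

Lemma optr_zop (P : op C 'I_2) : optr (opmul zop P) = 0.
Proof. by rewrite optr_qubit /zop !mul0r !addr0. Qed.

Lemma hermitian_zop : Defs.hermitian zop.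
Proof. by move=> i j; rewrite /zop rmorph0. Qed.

Definition sgnR (b : bool) : R := if b then -1 else 1.

Lemma sgn_complex b : sgn C b = Complex (sgnR b) 0.
Proof. by case: b => //=; apply/eqP; rewrite eq_complex /= oppr0 !eqxx. Qed.

Lemma sgnR_sqr b (x : R) : (sgnR b * x) ^+ 2 = x ^+ 2.
Proof. by case: b; rewrite /= ?mulN1r ?mul1r ?sqrrN. Qed.

Lemma bloch_pair_sigma2 b b' kap kap' :
  kap != kap' -> bloch_pair (ssigma C b kap) (ssigma C b' kap').
Proof.
move=> hk P /psd_qubit [a [d [u [v [h00 h11 h01 h10 [ha hd huv]]]]]].
exists (a + d), (sgnR b * bloch a d u v kap), (sgnR b' * bloch a d u v kap').
rewrite (optr_qubit_coords h00 h11) !optr_ssigma !(optr_sigma_coords h00 h11 h01 h10).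
rewrite !sgn_complex !creal_mul !sgnR_sqr; split => //; first lra.
exact: bloch_bound2.
Qed.

Lemma bloch_pair_sigma1 b kap : bloch_pair (ssigma C b kap) zop.
Proof.
move=> P /psd_qubit [a [d [u [v [h00 h11 h01 h10 [ha hd huv]]]]]].
exists (a + d), (sgnR b * bloch a d u v kap), 0.
rewrite (optr_qubit_coords h00 h11) optr_ssigma (optr_sigma_coords h00 h11 h01 h10).
rewrite optr_zop sgn_complex creal_mul sgnR_sqr expr0n addr0; split => //; first lra.
exact: bloch_bound1.
Qed.

Lemma bloch_pair_id : bloch_pair (@opid C _) zop.
Proof.
move=> P hP; have [a [d [u [v [h00 h11 _ _ [ha hd _]]]]]] := psd_qubit hP.
exists (a + d), (a + d), 0.
rewrite optr_opid (optr_qubit_coords h00 h11) optr_zop expr0n addr0.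
by split => //; lra.
Qed.

(* For Bloch pairs (A1, A2), (B1, B2), positive P, Q and a sign s:
   |x1 y1 - x2 y2| <= |x| |y| <= tr P tr Q  (Cauchy-Schwarz). *)
Lemma bloch_pair_product A1 A2 B1 B2 (P Q : op C 'I_2) (s : R) :
  bloch_pair A1 A2 -> bloch_pair B1 B2 -> psd P -> psd Q -> s ^+ 2 = 1 ->
  0 <= optr P * optr Q + Complex s 0 *
     (optr (opmul A1 P) * optr (opmul B1 Q) - optr (opmul A2 P) * optr (opmul B2 Q)).
Proof.
move=> bA bB hP hQ hs.
have [T [x1 [x2 [-> -> -> hT hx]]]] := bA P hP.
have [U [y1 [y2 [-> -> -> hU hy]]]] := bB Q hQ.
have csub (a b : R) : Complex a 0 - Complex b 0 = Complex (a - b) 0 :> C.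
  by apply/eqP; rewrite eq_complex /= subr0 !eqxx.
rewrite !creal_mul csub creal_mul caddE cleE addr0 eqxx /=.
set z := x1 * y1 - x2 * y2.
have hz : z ^+ 2 <= (T * U) ^+ 2.
  have cs : z ^+ 2 <= (x1 ^+ 2 + x2 ^+ 2) * (y1 ^+ 2 + y2 ^+ 2).
    by have := sqr_ge0 (x1 * y2 + x2 * y1); rewrite /z; nra.
  apply: le_trans cs _; rewrite exprMn; apply: ler_pM; nra.
have hTU : 0 <= T * U by nra.
nra.
Qed.

End BlochPairs.

Section SepBit.
Variables (C : numClosedFieldType) (k : nat) (t : 'I_k).
Local Notation Q := ('I_k * 'I_2)%type.

Definition at_sepbit (A B : op C 'I_2) : Q -> op C 'I_2 :=
  fun q => if q.1 == t then (if q.2 == o0 then A else B) else @opid C _.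

Lemma prod_sepbit (G : Q -> C) :
  \prod_q G q = G (t, o0) * G (t, o1) * \prod_(q | q.1 != t) G q.
Proof.
rewrite (bigID (fun q : Q => q.1 == t)) /=; congr (_ * _).
rewrite (bigD1 (t, o0)) ?eqxx //= (bigD1 (t, o1)) ?eqxx //=; last first.
  by rewrite xpair_eqE negb_and orbC.
rewrite big1 ?mulr1 ?mulrA // => -[i j] /= /andP [/andP [/eqP -> h0] h1].
by case: (ord2P j) h0 h1 => ->; rewrite eqxx.
Qed.

Lemma optr_at_sepbit (A B : op C 'I_2) (P : Q -> op C 'I_2) :
  optr (opmul (tensor (at_sepbit A B)) (tensor P)) =
  optr (opmul A (P (t, o0))) * optr (opmul B (P (t, o1))) *
  \prod_(q | q.1 != t) optr (P q).
Proof.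
rewrite optr_tensor prod_sepbit /at_sepbit /= eqxx /=.
by congr (_ * _ * _); apply: eq_bigr => q /negPf ->; apply: optr_opid.
Qed.

Lemma hermitian_at_sepbit (A B : op C 'I_2) :
  Defs.hermitian A -> Defs.hermitian B -> Defs.hermitian (tensor (at_sepbit A B)).
Proof.
move=> hA hB; apply: hermitian_tensor => q; rewrite /at_sepbit.
by case: ifP => _; [case: ifP|apply: hermitian_opid].
Qed.

End SepBit.

(* By
   [bloch_pair_product] it is nonnegative on fully separable operators, hence a
   SEP effect, although in general not a positive operator (this is what SEP
   measurements gain over quantum ones); moreover E_1 + E_(-1) = Id. *)
Section SepTest.
Variables (R : rcfType) (k : nat) (t : 'I_k).
Local Notation C := R[i].
Local Notation Q := ('I_k * 'I_2)%type.

Definition sep_test (A1 B1 A2 B2 : op C 'I_2) (s : R) : op C (qbasis Q) :=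
  fun a b => 2^-1 * @opid C _ a b + (Complex s 0 / 2) * tensor (at_sepbit t A1 B1) a b +
             (- (Complex s 0 / 2)) * tensor (at_sepbit t A2 B2) a b.

Lemma optr_sep_test A1 B1 A2 B2 s (P : Q -> op C 'I_2) :
  optr (opmul (sep_test A1 B1 A2 B2 s) (tensor P)) =
  2^-1 * ((optr (P (t, o0)) * optr (P (t, o1)) + Complex s 0 *
      (optr (opmul A1 (P (t, o0))) * optr (opmul B1 (P (t, o1))) -
       optr (opmul A2 (P (t, o0))) * optr (opmul B2 (P (t, o1))))) *
   \prod_(q | q.1 != t) optr (P q)).
Proof.
rewrite /sep_test optr_comb3 opid_tensor optr_tensor !optr_at_sepbit.
rewrite (prod_sepbit t) !optr_opid; under eq_bigr do rewrite optr_opid.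
ring.
Qed.

Lemma sep_effect_sep_test A1 B1 A2 B2 s :
  bloch_pair A1 A2 -> bloch_pair B1 B2 -> s ^+ 2 = 1 ->
  Defs.hermitian A1 -> Defs.hermitian B1 -> Defs.hermitian A2 -> Defs.hermitian B2 ->
  sep_effect (sep_test A1 B1 A2 B2 s).
Proof.
move=> bA bB hs hA1 hB1 hA2 hB2; split.
  move=> a b; rewrite /sep_test !rmorphD !rmorphM /= rmorphN rmorphM /=.
  have -> : (2^-1 : C)^* = 2^-1 by rewrite fmorphV /= conjC_nat.
  have -> : (Complex s 0 : C)^* = Complex s 0 by rewrite cconjE oppr0.
  by rewrite -hermitian_opid -(hermitian_at_sepbit t hA1 hB1) -(hermitian_at_sepbit t hA2 hB2).
move=> X [r [P [hP hX]]].
rewrite (optr_sumr _ hX); apply: sumr_ge0 => i _.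
rewrite optr_sep_test; apply: mulr_ge0; first by rewrite invr_ge0 ler0n.
apply: mulr_ge0; first exact: bloch_pair_product.
by apply: prodr_ge0 => q _; apply: optr_psd_ge0.
Qed.

Lemma sep_test_compl A1 B1 A2 B2 a b :
  sep_test A1 B1 A2 B2 1 a b + sep_test A1 B1 A2 B2 (-1) a b = @opid C _ a b.
Proof.
rewrite /sep_test; have -> : Complex (-1) 0 = - Complex 1 0 :> C.
  by apply/eqP; rewrite eq_complex /= oppr0 !eqxx.
have h2 : (2 : C) != 0 by rewrite pnatr_eq0.
by field.
Qed.

End SepTest.

Section TwelveStates.
Variable R : rcfType.
Local Notation C := R[i].
Local Notation label := ('I_3 * bool * bool)%type.

Definition rho1 (x : label) : op C 'I_2 := let: (kap, b1, _) := x in proj (ket C kap b1).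
Definition rho2 (x : label) : op C 'I_2 := let: (kap, _, b2) := x in proj (ket C kap b2).

Definition sepbit_corr (A1 B1 A2 B2 : op C 'I_2) (x : label) : C :=
  optr (opmul A1 (rho1 x)) * optr (opmul B1 (rho2 x)) -
  optr (opmul A2 (rho1 x)) * optr (opmul B2 (rho2 x)).

Definition separates (x y : label) (A1 B1 A2 B2 : op C 'I_2) : Prop :=
  [/\ bloch_pair A1 A2, bloch_pair B1 B2,
      [/\ Defs.hermitian A1, Defs.hermitian B1, Defs.hermitian A2 & Defs.hermitian B2],
      sepbit_corr A1 B1 A2 B2 x = 1 & sepbit_corr A1 B1 A2 B2 y = -1].

Lemma optr_ssigma_ket b kap' kap b0 :
  optr (opmul (ssigma C b kap') (proj (ket C kap b0))) =
  if kap' == kap then sgn C b * sgn C b0 else 0.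
Proof. by rewrite optr_ssigma optr_sigma_ket; case: eqP => _; rewrite ?mulr0. Qed.

Lemma sgn_neq b c : b != c -> sgn C b * sgn C c = -1.
Proof. by case: b; case: c => //= _; rewrite /sgn ?mulN1r ?mulrN1 ?opprK. Qed.

Lemma separates_axes kap b1 b2 kap' c1 c2 : kap != kap' ->
  separates (kap, b1, b2) (kap', c1, c2)
    (ssigma C b1 kap) (ssigma C b2 kap) (ssigma C c1 kap') (ssigma C c2 kap').
Proof.
move=> nk; have nk' : (kap' == kap) = false by rewrite eq_sym (negPf nk).
split; try exact: bloch_pair_sigma2.
- by split; apply: hermitian_ssigma.
- by rewrite /sepbit_corr /= !optr_ssigma_ket !eqxx nk' !sgnK mul0r subr0 mulr1.
- by rewrite /sepbit_corr /= !optr_ssigma_ket !eqxx (negPf nk) !sgnK mul0r sub0r mulr1.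
Qed.

Lemma separates_first kap b1 b2 c1 c2 : b1 != c1 ->
  separates (kap, b1, b2) (kap, c1, c2) (ssigma C b1 kap) (@opid C _) (zop R) (zop R).
Proof.
move=> nb; split.
- exact: bloch_pair_sigma1.
- exact: bloch_pair_id.
- by split; [apply: hermitian_ssigma|apply: hermitian_opid|
                apply: hermitian_zop|apply: hermitian_zop].
- rewrite /sepbit_corr /= !optr_zop optr_opid optr_proj_ket optr_ssigma_ket eqxx.
  by rewrite sgnK mul0r subr0 mulr1.
- rewrite /sepbit_corr /= !optr_zop optr_opid optr_proj_ket optr_ssigma_ket eqxx.
  by rewrite sgn_neq // mul0r subr0 mulr1.
Qed.

Lemma separates_second kap b1 b2 c2 : b2 != c2 ->
  separates (kap, b1, b2) (kap, b1, c2) (@opid C _) (ssigma C b2 kap) (zop R) (zop R).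
Proof.
move=> nb; split.
- exact: bloch_pair_id.
- exact: bloch_pair_sigma1.
- by split; [apply: hermitian_opid|apply: hermitian_ssigma|
                apply: hermitian_zop|apply: hermitian_zop].
- rewrite /sepbit_corr /= !optr_zop optr_opid optr_proj_ket optr_ssigma_ket eqxx.
  by rewrite sgnK mul0r subr0 mul1r.
- rewrite /sepbit_corr /= !optr_zop optr_opid optr_proj_ket optr_ssigma_ket eqxx.
  by rewrite sgn_neq // mul0r subr0 mul1r.
Qed.

Lemma separates_neq (x y : label) : x != y ->
  exists A1 B1 A2 B2 : op C 'I_2, separates x y A1 B1 A2 B2.
Proof.
case: x => [[kap b1] b2]; case: y => [[kap' c1] c2] hne.
have [ek|nk] := eqVneq kap kap'; last first.
  by eexists _, _, _, _; apply: separates_axes nk.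
subst kap'; have [eb|nb1] := eqVneq b1 c1; last first.
  by eexists _, _, _, _; apply: separates_first nb1.
subst c1; have nb2 : b2 != c2 by apply: contra hne => /eqP ->.
by eexists _, _, _, _; apply: separates_second nb2.
Qed.

End TwelveStates.

Section Discrimination.
Variables (C : numClosedFieldType) (T : finType) (eff : op C T -> Prop).

Lemma two_outcome_meas_sym (E F : op C T) :
  two_outcome_meas eff E F -> two_outcome_meas eff F E.
Proof. by case=> hE hF hEF; split=> // i j; rewrite addrC. Qed.

Lemma discriminated_neq (E F X Y : op C T) : two_outcome_meas eff E F ->
  optr X = 1 -> optr (opmul E X) = 1 -> optr (opmul F Y) = 1 -> X <> Y.
Proof.
move=> [_ _ hEF] hX hE hF eXY; have := optr_compl X hEF.
by rewrite hE eXY hF -eXY hX -[X in _ = X]addr0 => /addrI /eqP; rewrite oner_eq0.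
Qed.

Lemma wins_of_discriminable (isState : op C T -> Prop) (I : finType)
    (w : I -> op C T) : (forall i, isState (w i)) ->
  (forall i j, i != j -> exists E F, [/\ two_outcome_meas eff E F,
     optr (opmul E (w i)) = 1 & optr (opmul F (w j)) = 1]) ->
  wins_PD_perfectly isState eff #|I|.
Proof.
move=> hst hdis.
pose disc (ij : I * I) (EF : op C T * op C T) := ij.1 != ij.2 ->
  [/\ two_outcome_meas eff EF.1 EF.2, optr (opmul EF.1 (w ij.1)) = 1
    & optr (opmul EF.2 (w ij.2)) = 1].
have [M hM] : {M & forall ij, disc ij (M ij)}.
  apply: choice => -[i j]; have [<-|nij] := eqVneq i j.
    by exists (@opid C T, @opid C T); rewrite /disc eqxx.
  by have [E [F h]] := hdis i j nij; exists (E, F).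
exists (fun e => w (enum_val e)); split=> [e|]; first exact: hst.
exists (fun e e' : 'I_#|I| => if (e < e')%N then (M (enum_val e, enum_val e')).1
                    else (M (enum_val e', enum_val e)).2).
move=> e e' hne; have val_neq (x y : 'I_#|I|) : x != y -> enum_val x != enum_val y.
  by apply: contra => /eqP /enum_val_inj ->.
have [lt|ge] := ltnP e e'.
  rewrite ltnNge (ltnW lt) /=.
  by have [hm h1 _] := hM (_, _) (val_neq _ _ hne).
have lt : (e' < e)%N by rewrite ltn_neqAle ge andbT; apply: contra hne => /eqP/val_inj->.
rewrite lt; have [hm _ h2] := hM (_, _) (val_neq _ _ (negbT (ltn_eqF lt))).
by split=> //; apply: two_outcome_meas_sym.
Qed.

End Discrimination.

Section TwelveProducts.
Variables (R : rcfType) (k : nat).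
Local Notation C := R[i].
Local Notation Q := ('I_k * 'I_2)%type.
Local Notation labels := {ffun 'I_k -> 'I_3 * bool * bool}.

Definition twelve_factor (a : labels) (q : Q) : op C 'I_2 :=
  let: (kappa, b1, b2) := a q.1 in
  proj (ket C kappa (if val q.2 == 0%N then b1 else b2)).

Lemma twelve_stateE (a : labels) : twelve_state C a = tensor (twelve_factor a).
Proof. by []. Qed.

Lemma density_twelve_factor (a : labels) q : density (twelve_factor a q).
Proof.
by rewrite /twelve_factor; case: (a q.1) => [[kap b1] b2]; split;
  [apply: psd_proj|apply: optr_proj_ket].
Qed.

Lemma optr_twelve_state (a : labels) : optr (twelve_state C a) = 1.
Proof.
rewrite -optr_opid opid_tensor twelve_stateE optr_tensor big1 // => q _.
by rewrite optr_opid; case: (density_twelve_factor a q).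
Qed.

Lemma sep_state_twelve (a : labels) : sep_state (twelve_state C a).
Proof.
exists 1%N, (fun _ => 1), (fun _ => twelve_factor a); split.
- by move=> _; rewrite ler01.
- by rewrite big_ord1.
- by move=> _ q; apply: density_twelve_factor.
- by move=> x y; rewrite big_ord1 mul1r.
Qed.

Lemma optr_sep_test_twelve t A1 B1 A2 B2 s (a : labels) :
  optr (opmul (sep_test t A1 B1 A2 B2 s) (twelve_state C a)) =
  2^-1 * (1 + Complex s 0 * sepbit_corr A1 B1 A2 B2 (a t)).
Proof.
have tr1 q : optr (twelve_factor a q) = 1 by case: (density_twelve_factor a q).
rewrite twelve_stateE optr_sep_test !tr1 mul1r big1 => [|q _]; last exact: tr1.
rewrite mulr1.
by rewrite /twelve_factor /sepbit_corr /=; case: (a t) => [[kap b1] b2].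
Qed.

Lemma twelve_discriminated (a b : labels) : a != b ->
  exists E F, [/\ two_outcome_meas (@sep_effect C Q) E F,
    optr (opmul E (twelve_state C a)) = 1 & optr (opmul F (twelve_state C b)) = 1].
Proof.
move=> hab; have [t ht] : exists t, a t != b t.
  apply/existsP; rewrite -negb_forall; apply: contra hab => /forallP h.
  by apply/eqP/ffunP => q; apply/eqP.
have [A1 [B1 [A2 [B2 [bA bB [h1 h2 h3 h4] ca cb]]]]] := separates_neq R ht.
have sep s : s ^+ 2 = 1 -> sep_effect (sep_test t A1 B1 A2 B2 s).
  by move=> hs; apply: sep_effect_sep_test.
have half : 2^-1 * (1 + 1) = 1 :> C by rewrite -[1 + 1]/(2%:R) mulVf // pnatr_eq0.
exists (sep_test t A1 B1 A2 B2 1), (sep_test t A1 B1 A2 B2 (-1)); split.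
- split; [apply: sep; exact: expr1n|apply: sep; rewrite sqrrN; exact: expr1n|].
  exact: sep_test_compl.
- by rewrite optr_sep_test_twelve ca mulr1.
- rewrite optr_sep_test_twelve cb.
  have -> : Complex (-1) 0 = -1 :> C by apply/eqP; rewrite eq_complex /= oppr0 !eqxx.
  by rewrite mulrNN mulr1.
Qed.

End TwelveProducts.

Section Forms.
Variables (C : numClosedFieldType) (T : finType).
Implicit Types (A : op C T) (u v x : T -> C).

Definition qform A u v : C := \sum_a \sum_b (u a)^* * A a b * v b.
Definition vadd u v : T -> C := fun a => u a + v a.
Definition vscale (c : C) u : T -> C := fun a => c * u a.
Definition basis_vec (i : T) : T -> C := fun a => (a == i)%:R.
Definition apply_op A v : T -> C := fun i => \sum_b A i b * v b.

Lemma qformDl A u v x : qform A (vadd u v) x = qform A u x + qform A v x.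
Proof.
rewrite /qform -big_split /=; apply: eq_bigr => a _.
by rewrite -big_split /=; apply: eq_bigr => b _; rewrite /vadd rmorphD /=; ring.
Qed.

Lemma qformDr A u v x : qform A x (vadd u v) = qform A x u + qform A x v.
Proof.
rewrite /qform -big_split /=; apply: eq_bigr => a _.
by rewrite -big_split /=; apply: eq_bigr => b _; rewrite /vadd; ring.
Qed.

Lemma qformZl A c u x : qform A (vscale c u) x = c^* * qform A u x.
Proof.
rewrite /qform mulr_sumr; apply: eq_bigr => a _.
by rewrite mulr_sumr; apply: eq_bigr => b _; rewrite /vscale rmorphM /=; ring.
Qed.

Lemma qformZr A c u x : qform A x (vscale c u) = c * qform A x u.
Proof.
rewrite /qform mulr_sumr; apply: eq_bigr => a _.
by rewrite mulr_sumr; apply: eq_bigr => b _; rewrite /vscale; ring.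
Qed.

Lemma apply_op_basis A a j : apply_op A (basis_vec j) a = A a j.
Proof.
rewrite /apply_op (bigD1 j) //= big1 ?addr0 /basis_vec ?eqxx ?mulr1 // => b /negPf hb.
by rewrite hb mulr0.
Qed.

Lemma apply_opid v a : apply_op (@opid C T) v a = v a.
Proof.
rewrite /apply_op (bigD1 a) //= big1 ?addr0 /opid ?eqxx ?mul1r // => b hb.
by rewrite eq_sym (negPf hb) mul0r.
Qed.

Lemma qform_basisl A i x : qform A (basis_vec i) x = apply_op A x i.
Proof.
rewrite /qform (bigD1 i) //= [X in _ + X = _]big1 ?addr0; last first.
  by move=> a /negPf hai; rewrite big1 // => b _; rewrite /basis_vec hai rmorph0 !mul0r.
by apply: eq_bigr => b _; rewrite /basis_vec eqxx rmorph1 mul1r.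
Qed.

Lemma qform_basisr A i x : qform A x (basis_vec i) = \sum_a (x a)^* * A a i.
Proof.
rewrite /qform; apply: eq_bigr => a _.
rewrite (bigD1 i) //= big1 ?addr0 /basis_vec ?eqxx ?mulr1 // => b /negPf hb.
by rewrite hb mulr0.
Qed.

Lemma qform_basis2 A i : qform A (basis_vec i) (basis_vec i) = A i i.
Proof. by rewrite qform_basisl apply_op_basis. Qed.

Lemma qform_conj A u v : Defs.hermitian A -> qform A u v = (qform A v u)^*.
Proof.
move=> hA; rewrite /qform rmorph_sum /= exchange_big; apply: eq_bigr => a _.
rewrite rmorph_sum /=; apply: eq_bigr => b _.
by rewrite !rmorphM /= conjCK -hA; ring.
Qed.

Lemma qform_shift A x i t : Defs.hermitian A ->
  qform A (vadd x (vscale t (basis_vec i))) (vadd x (vscale t (basis_vec i))) =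
  qform A x x + t * (qform A (basis_vec i) x)^* + t^* * qform A (basis_vec i) x +
  t^* * t * A i i.
Proof.
move=> hA; rewrite qformDl !qformDr !qformZl !qformZr qform_basis2.
by rewrite (qform_conj x (basis_vec i) hA); ring.
Qed.

Lemma psd_qform_ge0 A x : psd A -> 0 <= qform A x x.
Proof. by move=> [_ h]; apply: h. Qed.

Lemma psd_diag_ge0 A i : psd A -> 0 <= A i i.
Proof. by move=> hA; rewrite -qform_basis2; apply: psd_qform_ge0. Qed.

End Forms.

Section Kernel.
Variable R : rcfType.
Local Notation C := R[i].

Lemma ge0_complex (z : C) : 0 <= z -> exists d : R, z = Complex d 0 /\ 0 <= d.
Proof. by case: z => a b; rewrite cleE => /andP [/eqP <- h]; exists a. Qed.

(* If n >= 0 and -2 s n + s^2 n d >= 0 for every real s then n = 0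
   (take s = 1 / (d + 1)). *)
Lemma quadratic_ge0_eq0 (n d : R) : 0 <= n -> 0 <= d ->
  (forall s : R, 0 <= - 2 * s * n + s ^+ 2 * n * d) -> n = 0.
Proof.
move=> hn hd key; pose s := (d + 1)^-1.
have hs1 : s * (d + 1) = 1 by rewrite /s mulVf // gt_eqF // ltr_wpDl.
have hs0 : 0 < s by rewrite /s invr_gt0 ltr_wpDl.
have hk := key s.
have e2 : s ^+ 2 * n * d = s * n * (1 - s) by rewrite -hs1; ring.
rewrite e2 in hk.
have hk2 : 0 <= - (n * (s * (1 + s))) by lra.
have hp : 0 < s * (1 + s) by nra.
set p := s * (1 + s) in hk2 hp.
have : n <= 0 by nra.
lra.
Qed.

Lemma psd_isotropic_kernel (T : finType) (A : op C T) (w : T -> C) :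
  psd A -> qform A w w = 0 -> forall i, apply_op A w i = 0.
Proof.
move=> hA hw0 i; have [d [Ed hd]] := ge0_complex (psd_diag_ge0 i hA).
rewrite -qform_basisl; case Ec: (qform A (basis_vec C i) w) => [x y].
suff n0 : x ^+ 2 + y ^+ 2 = 0.
  have x0 : x = 0 by nra.
  have y0 : y = 0 by nra.
  by rewrite x0 y0.
apply: (quadratic_ge0_eq0 _ hd); first nra.
move=> s; have := psd_qform_ge0
  (vadd w (vscale (Complex (- s) 0 * Complex x y) (basis_vec C i))) hA.
rewrite (qform_shift _ _ _ hA.1) hw0 Ec Ed !cconjE !cmulE !caddE cleE => /andP [_].
by move=> /= h; lra.
Qed.

End Kernel.

(* Every positive semidefinite operator is a Gram operator sum_i v_i v_i^*
   (Cholesky decomposition), by repeatedly splitting off the rank-one part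
   of a nonzero diagonal entry: A = v v^* + (Schur complement of A_jj). *)
Section Gram.
Variables (R : rcfType) (T : finType).
Local Notation C := R[i].
Implicit Types (A : op C T).

Definition gram A (r : nat) (v : 'I_r -> T -> C) : Prop :=
  forall a b, A a b = \sum_(i < r) v i a * (v i b)^*.

Lemma psd_col0 A j : psd A -> A j j = 0 -> forall a, A a j = 0.
Proof.
move=> hA h0 a; have := psd_isotropic_kernel hA (w := basis_vec C j).
by rewrite qform_basis2 => /(_ h0 a); rewrite apply_op_basis.
Qed.

Definition schur A j : op C T := fun a b => A a b - A a j * A j b / A j j.

Lemma qform_schur A j x : psd A -> A j j != 0 ->
  qform (schur A j) x x =
  qform A (vadd x (vscale (- qform A (basis_vec C j) x / A j j) (basis_vec C j)))
          (vadd x (vscale (- qform A (basis_vec C j) x / A j j) (basis_vec C j))).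
Proof.
move=> hA hd; have hH := hA.1.
have dr : (A j j)^* = A j j by rewrite conj_Creal // ger0_real // psd_diag_ge0.
rewrite (qform_shift _ _ _ hH) rmorphM /= rmorphN fmorphV /= dr.
have -> : qform (schur A j) x x =
    qform A x x - qform A x (basis_vec C j) * qform A (basis_vec C j) x / A j j.
  rewrite qform_basisl qform_basisr /qform -mulrA mulr_suml -sumrB.
  apply: eq_bigr => a _; rewrite mulr_suml mulr_sumr -sumrB.
  by apply: eq_bigr => b _; rewrite /schur; field.
by rewrite (qform_conj x (basis_vec C j) hH); field.
Qed.

Lemma psd_schur A j : psd A -> A j j != 0 -> psd (schur A j).
Proof.
move=> hA hd; have hH := hA.1.
have dr : (A j j)^* = A j j by rewrite conj_Creal // ger0_real // psd_diag_ge0.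
split=> [a b|x].
  by rewrite /schur rmorphB /= !rmorphM /= fmorphV /= dr -!hH [A j a * _]mulrC.
change (0 <= qform (schur A j) x x).
by rewrite (qform_schur x hA hd); apply: psd_qform_ge0.
Qed.

Lemma schur_support A j : psd A -> A j j != 0 ->
  [set i | schur A j i i != 0] \proper [set i | A i i != 0].
Proof.
move=> hA hd; apply/properP; split.
  apply/subsetP => i; rewrite !inE; apply: contra => /eqP hi.
  by rewrite /schur (psd_col0 hA hi j) hi mulr0 mul0r subr0.
exists j; first by rewrite inE.
by rewrite inE negbK /schur mulrC mulrA mulVf // mul1r subrr.
Qed.

Lemma schur_rank_one A j : psd A -> A j j != 0 -> forall a b,
  A a b = A a j / sqrtC (A j j) * (A b j / sqrtC (A j j))^* + schur A j a b.
Proof.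
move=> hA hd a b; have hH := hA.1; have hd0 := psd_diag_ge0 j hA.
have sr : (sqrtC (A j j))^* = sqrtC (A j j) by rewrite conj_Creal // ger0_real // sqrtC_ge0.
have s2 : sqrtC (A j j) * sqrtC (A j j) = A j j by rewrite -expr2 sqrtCK.
have sn : sqrtC (A j j) != 0 by rewrite sqrtC_eq0.
rewrite rmorphM /= fmorphV /= sr -hH /schur.
move: s2 sn; set q := sqrtC (A j j) => s2 sn; rewrite -s2.
by field; rewrite sn.
Qed.

Lemma gram_zero_diag A : psd A -> (forall j, A j j = 0) -> gram A (fun (_ : 'I_0) _ => 0).
Proof. by move=> hA h0 a b; rewrite big_ord0; apply: (psd_col0 hA). Qed.

(* Induction on the number of nonzero diagonal entries. *)
Lemma gram_psd A : psd A -> exists r (v : 'I_r -> T -> C), gram A v.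
Proof.
move: {2}#|_| (leqnn #|[set i | A i i != 0]|) => n; elim: n A => [|n IH] A hn hA.
  exists 0%N, (fun _ _ => 0); apply: gram_zero_diag => // j.
  move: hn; rewrite leqn0 => /eqP /cards0_eq /setP /(_ j).
  by rewrite !inE => /negbFE /eqP.
have [/existsP [j hj]|] := boolP [exists j, A j j != 0]; last first.
  rewrite negb_exists => /forallP h0; exists 0%N, (fun _ _ => 0).
  by apply: gram_zero_diag => // j; apply/eqP/negbNE/h0.
have [r [v hv]] := IH _ (leq_trans (proper_card (schur_support hA hj)) hn) (psd_schur hA hj).
exists r.+1, (fun i => if unlift ord0 i is Some l then v l else fun a => A a j / sqrtC (A j j)).
move=> a b; rewrite big_ord_recl unlift_none (schur_rank_one hA hj) hv.
by congr (_ + _); apply: eq_bigr => l _; rewrite liftK.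
Qed.

End Gram.

Section QuantumBound.
Variables (R : rcfType) (T : finType).
Local Notation C := R[i].

Lemma optr_gram (A rho : op C T) r (v : 'I_r -> T -> C) : gram rho v ->
  optr (opmul A rho) = \sum_(i < r) qform A (v i) (v i).
Proof.
move=> hv; rewrite /optr /opmul /qform.
transitivity (\sum_a \sum_(i < r) \sum_b (v i a)^* * A a b * v i b); last first.
  by rewrite exchange_big.
apply: eq_bigr => a _; rewrite exchange_big /=; apply: eq_bigr => b _.
by rewrite hv mulr_sumr; apply: eq_bigr => i _; ring.
Qed.

Lemma density_support (rho : op C T) : density rho -> exists w : T -> C,
  (exists a, w a != 0) /\
  forall A, psd A -> optr (opmul A rho) = 0 -> forall i, apply_op A w i = 0.
Proof.
move=> [hpsd htr]; have [r [v hv]] := gram_psd hpsd.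
have [i hi] : exists i, qform (@opid C T) (v i) (v i) != 0.
  apply/existsP; apply: contraT; rewrite negb_exists => /forallP h0.
  move: htr; rewrite -optr_opid (optr_gram _ hv) big1 => [/eqP|i _]; last first.
    exact/eqP/negbNE/h0.
  by rewrite eq_sym oner_eq0.
exists (v i); split.
  apply/existsP; apply: contraTT hi; rewrite negb_exists negbK => /forallP h0.
  apply/eqP; rewrite /qform big1 // => a _; rewrite big1 // => b _.
  by rewrite (eqP (negbNE (h0 a))) rmorph0 !mul0r.
move=> A hA h0; apply: psd_isotropic_kernel => //.
move: h0; rewrite (optr_gram _ hv) => /psumr_eq0P -> //.
by move=> l _; apply: psd_qform_ge0.
Qed.

(* If M + M' = Id with M positive, M' w = 0 and M w' = 0, then w = M w is
   orthogonal to w'. *)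
Lemma support_orthogonal (M M' : op C T) (w w' : T -> C) : psd M ->
  (forall a b, M a b + M' a b = @opid C T a b) ->
  (forall i, apply_op M' w i = 0) -> (forall i, apply_op M w' i = 0) ->
  \sum_a w a * (w' a)^* = 0.
Proof.
move=> hM hMM' hw hw'.
have Mw a : apply_op M w a = w a.
  rewrite -[LHS]addr0 -(hw a) /apply_op -big_split /=.
  under eq_bigr => b _ do rewrite -mulrDl hMM'.
  exact: apply_opid.
transitivity (\sum_a apply_op M w a * (w' a)^*); first by apply: eq_bigr => a _; rewrite Mw.
rewrite /apply_op; under eq_bigr do rewrite mulr_suml.
rewrite exchange_big big1 // => b _.
transitivity (w b * (apply_op M w' b)^*); last by rewrite hw' rmorph0 mulr0.
rewrite rmorph_sum mulr_sumr; apply: eq_bigr => a _.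
by rewrite rmorphM /= -hM.1; ring.
Qed.

Lemma sum_enum (F : T -> C) : \sum_a F a = \sum_(j < #|T|) F (enum_val j).
Proof.
apply: (reindex enum_val).
by exists enum_rank => x _; [exact: enum_valK|exact: enum_rankK].
Qed.

(* N nonzero pairwise orthogonal vectors of C^T: their Gram matrix W W^*
   is diagonal and invertible, so N = rank of W W^* <= #|T|. *)
Lemma orthogonal_count (N : nat) (w : 'I_N -> T -> C) :
  (forall i, exists a, w i a != 0) ->
  (forall i j, i != j -> \sum_a w i a * (w j a)^* = 0) -> (N <= #|T|)%N.
Proof.
move=> hnz horth.
pose W : 'M[C]_(N, #|T|) := \matrix_(i, j) w i (enum_val j).
pose W' : 'M[C]_(#|T|, N) := \matrix_(j, i) (w i (enum_val j))^*.
pose norms := \row_(i < N) \sum_a w i a * (w i a)^*.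
have hG : W *m W' = diag_mx norms.
  apply/matrixP => i j; rewrite !mxE.
  have -> : \sum_l W i l * W' l j = \sum_a w i a * (w j a)^*.
    by rewrite sum_enum; apply: eq_bigr => l _; rewrite !mxE.
  by have [<-|nij] := eqVneq i j; rewrite ?mxE // horth.
have norm_neq0 i : norms 0 i != 0.
  rewrite mxE; have [a ha] := hnz i; apply/negP => /eqP h0.
  have := psumr_eq0P (fun b _ => mul_conjC_ge0 (w i b)) h0 (i := a) isT.
  by move=> /eqP; rewrite mul_conjC_eq0 (negPf ha).
have hunit : W *m W' \in unitmx.
  by rewrite hG unitmxE det_diag unitfE; apply/prodf_neq0 => i _.
by rewrite -(mxrank_unit hunit) (leq_trans (mxrankM_maxl _ _)) // rank_leq_col.
Qed.

Lemma quantum_discrimination_bound (n : nat) :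
  wins_PD_perfectly (@density C T) (@psd C T) n -> (n <= #|T|)%N.
Proof.
move=> [enc [hst [M hM]]].
pose supp (rho : op C T) (w : T -> C) := (exists a, w a != 0) /\
  forall A, psd A -> optr (opmul A rho) = 0 -> forall i, apply_op A w i = 0.
have [w hw] : {w : 'I_n -> T -> C & forall eta, supp (enc eta) (w eta)}.
  by apply: (@choice _ _ (fun eta => supp (enc eta))) => eta; apply: density_support.
apply: (orthogonal_count (fun eta => (hw eta).1)) => e e' hne.
have [[hMe hMe' hc] he] := hM e e' hne.
have hne' : e' != e by rewrite eq_sym.
have [[_ _ hc'] he'] := hM e' e hne'.
(* Bob's answer "e'" never occurs on the state of e, and conversely. *)
have no_e' := optr_compl_certain hc (hst e).2 he.
have no_e := optr_compl_certain hc' (hst e').2 he'.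
exact: (support_orthogonal hMe hc ((hw e).2 _ hMe' no_e') ((hw e').2 _ hMe no_e)).
Qed.

End QuantumBound.

(* 12^k <= 2^m = 2^(2k) 2^(m - 2k) forces 2k <= m and k log2 3 <= m - 2k. *)
Lemma qubits_lower_bound (R : realType) (k m : nat) : (12 ^ k <= 2 ^ m)%N ->
  ((2 * k)%:Z + Num.ceil (k%:R * (ln (3 : R) / ln (2 : R))) <= m%:Z)%R.
Proof.
move=> h; have e12 : (12 ^ k = 2 ^ (2 * k) * 3 ^ k)%N by rewrite expnM -expnMn.
have h2k : (2 * k <= m)%N.
  rewrite -(@leq_exp2l 2) //; apply: leq_trans h.
  by rewrite e12 leq_pmulr // expn_gt0.
have h3 : (3 ^ k <= 2 ^ (m - 2 * k))%N.
  by rewrite -(@leq_pmul2l (2 ^ (2 * k))) ?expn_gt0 // -expnD subnKC // -e12.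
have h3R : (3 : R) ^+ k <= (2 : R) ^+ (m - 2 * k) by rewrite -!natrX ler_nat.
have hl2 : 0 < ln (2 : R) by apply: ln_gt0; rewrite ltr1n.
have hlog : k%:R * ln (3 : R) <= (m - 2 * k)%:R * ln (2 : R).
  rewrite !mulr_natl -!lnXn ?ltr0n //.
  by rewrite ler_ln // posrE exprn_gt0 // ltr0n.
have hc : Num.ceil (k%:R * (ln (3 : R) / ln (2 : R))) <= (m - 2 * k)%:Z.
  by rewrite ceil_le_int mulrA ler_pdivrMr.
by rewrite -(subnKC h2k) PoszD lerD2l.
Qed.

Lemma card_twelve_labels (k : nat) : #|{ffun 'I_k -> 'I_3 * bool * bool}| = (12 ^ k)%N.
Proof. by rewrite card_ffun !card_prod !card_ord card_bool. Qed.

Theorem theorem2 (R : realType) (k : nat) (hk : (0 < k)%N) :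
  (* 2k SEP-bits suffice: (C^2 (x)_min C^2)^{(x)_min k} wins P_D^[12^k] perfectly *)
  wins_PD_perfectly (@sep_state R[i] ('I_k * 'I_2)%type)
                    (@sep_effect R[i] ('I_k * 'I_2)%type) (12 ^ k)
  (* indeed the 12^k product states are distinct SEP states, pairwise
     distinguishable with SEP measurements *)
  /\ injective (@twelve_state R[i] k)
  /\ (forall a, sep_state (@twelve_state R[i] k a))
  /\ pairwise_distinguishable (@sep_effect R[i] ('I_k * 'I_2)%type)
                              (@twelve_state R[i] k)
  (* under quantum composition, perfect winning with m qubits requires
     m >= 2k + ceil(k log_2 3) *)
  /\ (forall m : nat,
        wins_PD_perfectly (@density R[i] (qbasis 'I_m)) (@psd R[i] (qbasis 'I_m))
                          (12 ^ k) ->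
        ((2 * k)%:Z + Num.ceil (k%:R * (ln (3 : R) / ln (2 : R))) <= m%:Z)%R).
Proof.
have disc := @twelve_discriminated R k.
split.
  rewrite -card_twelve_labels; apply: wins_of_discriminable disc.
  exact: sep_state_twelve.
split.
  move=> a b eab; apply/eqP; apply: contraT => /disc [E [F [hEF hE hF]]].
  by have := discriminated_neq hEF (optr_twelve_state R a) hE hF.
split; first exact: sep_state_twelve.
split; first by move=> a b nab; apply: disc; apply: contra_not_neq nab => ->.
move=> m /quantum_discrimination_bound; rewrite card_ffun !card_ord.
exact: qubits_lower_bound.
Qed.
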